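(* If $\ell\ge 5$ is not divisible by three, then the uniform Tur\'an density of the tight $3$-uniform cycle $C_\ell^{(3)}$ is at least $4/27$.
   Context: For $\ell\ge 5$, the tight $3$-uniform cycle $C_\ell^{(3)}$ is the $3$-uniform hypergraph with $\ell$ vertices $v_1,\ldots,v_\ell$ whose edges are exactly the triples $\{v_i,v_{i+1},v_{i+2}\}$, $i\in[\ell]$, indices modulo $\ell$. For an $n$-vertex $3$-uniform hypergraph $H$ and $\varepsilon>0$, the $\varepsilon$-linear density of $H$ is the minimum edge density of an induced subhypergraph of $H$ with at least $\varepsilon n$ vertices. The uniform Tur\'an density of a $3$-uniform hypergraph $F$ is the supremum of all $d\in[0,1]$ such that for every $\varepsilon>0$ there exist arbitrarily large $F$-free $3$-uniform hypergraphs with $\varepsilon$-linear density at least $d$. *)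

From HB Require Import structures.
From mathcomp Require Import all_boot all_order all_algebra.
From mathcomp Require Import classical_sets reals.
Unset Strict Implicit. Unset Printing Implicit Defensive.
Import Order.TTheory GRing.Theory Num.Theory.
Local Open Scope ring_scope.

Definition uniform3 (n : nat) (H : {set {set 'I_n}}) : bool :=
  [forall e in H, #|e| == 3%N].

Definition contains_copy (k n : nat) (F : {set {set 'I_k}}) (H : {set {set 'I_n}}) : Prop :=
  exists f : 'I_k -> 'I_n, injective f /\ forall e, e \in F -> f @: e \in H.

Definition free_of (k n : nat) (F : {set {set 'I_k}}) (H : {set {set 'I_n}}) : Prop :=
  ~ contains_copy k n F H.

Lemma ord_gt0 (l : nat) (i : 'I_l) : (0 < l)%N.
Proof. exact: leq_ltn_trans (leq0n i) (ltn_ord i). Qed.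
Arguments ord_gt0 {l} i.

Definition cyc_shift (l : nat) (i : 'I_l) (k : nat) : 'I_l :=
  @Ordinal l ((i + k) %% l) (ltn_pmod (i + k) (ord_gt0 i)).

Definition tight_cycle (l : nat) : {set {set 'I_l}} :=
  [set [set cyc_shift l i 0; cyc_shift l i 1; cyc_shift l i 2] | i : 'I_l].

Definition induced_density (R : realType) (n : nat) (H : {set {set 'I_n}}) (S : {set 'I_n}) : R :=
  (#|[set e in H | e \subset S]|)%:R / ('C(#|S|, 3))%:R.

(* eps-linear density: minimum edge density of an induced subhypergraph on at
   least eps*n vertices (default 1 if there is no such vertex set, i.e. eps > 1). *)
Definition linear_density (R : realType) (eps : R) (n : nat) (H : {set {set 'I_n}}) : R :=
  \big[Order.min/1]_(S : {set 'I_n} | eps * n%:R <= (#|S|)%:R) induced_density R n H S.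

Definition uniform_turan_density (R : realType) (k : nat) (F : {set {set 'I_k}}) : R :=
  sup [set d : R | 0 <= d <= 1 /\
     forall eps : R, 0 < eps -> forall N : nat, exists n : nat, (N <= n)%N /\
       exists H : {set {set 'I_n}}, uniform3 n H /\ free_of k n F H /\
         d <= linear_density R eps n H].

From HB Require Import structures.
From mathcomp Require Import all_boot all_order all_algebra.
From mathcomp Require Import classical_sets reals sequences exp.
From mathcomp Require Import zify ring lra.
Import Order.TTheory GRing.Theory Num.Theory.
Local Open Scope ring_scope.

(* Colour the ordered pairs of vertices uniformly at random with three colours
   and let x < y < z be an edge when xy is red and xz, yz are not: every triple
   is an edge with probability 1/3 * 2/3 * 2/3 = 4/27.  The red pair of an edge
   is the one avoiding its largest vertex.  Consecutive edges of a tight cycle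
   share a pair, so the position of the maximum in the window v_i, v_{i+1},
   v_{i+2} moves back by one step mod 3 at each step, and the length of the
   cycle is a multiple of 3.
   The triples of a set S with vertex sum r mod n pairwise share no pair, so
   their edge indicators are independent; a Chernoff bound for each of these
   2^n n families and a union bound give a colouring in which every S with at
   least eps n vertices has edge density at least d, for any d < 4/27. *)

Section Triples.
Local Open Scope nat_scope.
Context {n : nat}.
Implicit Types (x y z u w : 'I_n) (A : {set 'I_n}).

Lemma card_set3_sorted x y z : x < y -> y < z -> #|[set x; y; z]| = 3.
Proof.
move=> xy yz; have xz := ltn_trans xy yz.
by rewrite -finset.setUA !cardsU1 cards1 !inE -!val_eqE /= !ltn_eqF.
Qed.

Lemma set3_sorted {A} : #|A| = 3 ->
  exists x y z, [/\ x < y, y < z & A = [set x; y; z]].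
Proof.
have : sorted (relpre val ltn) (enum A).
  rewrite /enum_mem; apply: sorted_filter; first exact: ltn_trans.
  by have := iota_ltn_sorted 0 n; rewrite -val_enum_ord sorted_map enumT.
rewrite cardE -[in X in _ -> _ -> X](set_enum A).
case: (enum A) => [|x [|y [|z [|? ?]]]] //= /and3P[xy yz _] _.
by exists x, y, z; split=> //; apply/setP => t; rewrite !inE orbA.
Qed.

Lemma set3_sorted_inj {x y z x' y' z'} : x < y -> y < z -> x' < y' -> y' < z' ->
  [set x; y; z] = [set x'; y'; z'] -> [/\ x = x', y = y' & z = z'].
Proof.
move=> xy yz xy' yz' E.
have eq_s : [:: x; y; z] =i [:: x'; y'; z'].
  by move=> t; have := congr1 (fun B : {set _} => t \in B) E; rewrite !inE -!orbA.
have ltn_tr : transitive (relpre (@nat_of_ord n) ltn) by move=> a b c; exact: ltn_trans.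
have ltn_irr : irreflexive (relpre (@nat_of_ord n) ltn) by move=> a; exact: ltnn.
have := @irr_sorted_eq _ _ ltn_tr ltn_irr [:: x; y; z] [:: x'; y'; z'].
by rewrite /= xy yz xy' yz' => /(_ isT isT eq_s) [-> -> ->].
Qed.

Lemma set3_rot x y z : [set y; z; x] = [set x; y; z].
Proof. by apply/setP=> t; rewrite !inE; case: (t == x); case: (t == y); case: (t == z). Qed.

Lemma set3_third {A u w} : #|A| = 3 -> u \in A -> w \in A -> u != w ->
  exists a, A = [set u; w; a] /\ \sum_(x in A) x = u + (w + a).
Proof.
move=> A3 uA wA uw.
have wAu : w \in A :\ u by rewrite !inE eq_sym uw.
have : #|A :\ u :\ w| == 1.
  by move: A3; rewrite (cardsD1 u A) uA (cardsD1 w (A :\ u)) wAu !add1n => -[->].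
case/cards1P => a Ea; exists a; split.
  by rewrite -finset.setUA -Ea !finset.setD1K.
by rewrite (big_setD1 _ uA) (big_setD1 _ wAu) Ea big_set1.
Qed.

Definition pairs_in A : pred ('I_n * 'I_n) :=
  fun k => [&& k.1 \in A, k.2 \in A & k.1 < k.2].

End Triples.

(* Only the colours of the pairs (x, y) with x < y are used. *)
Notation colouring n := {ffun 'I_n * 'I_n -> 'I_3}.

Section ColourGraph.
Local Open Scope nat_scope.
Context {n : nat}.
Implicit Types (phi psi : colouring n) (x y z a b c : 'I_n) (A : {set 'I_n}).

Definition red phi x y : bool := phi (x, y) == ord0.

Definition edge_pattern phi x y z : bool :=
  [&& x < y, y < z, red phi x y, ~~ red phi x z & ~~ red phi y z].

Definition colour_graph phi : {set {set 'I_n}} :=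
  [set A | [exists x, exists y, exists z, edge_pattern phi x y z && (A == [set x; y; z])]].

Lemma colour_graphP phi A : A \in colour_graph phi ->
  exists x y z, edge_pattern phi x y z /\ A = [set x; y; z].
Proof.
by rewrite inE => /existsP[x /existsP[y /existsP[z /andP[p /eqP ->]]]]; exists x, y, z.
Qed.

Lemma colour_graph_card3 phi A : A \in colour_graph phi -> #|A| = 3.
Proof.
by move=> /colour_graphP[x [y [z [/and5P[xy yz _ _ _] ->]]]]; exact: card_set3_sorted.
Qed.

Lemma colour_graph_uniform phi : uniform3 n (colour_graph phi).
Proof. by apply/forall_inP => A /colour_graph_card3 ->. Qed.

Lemma colour_graph_sorted phi x y z : x < y -> y < z ->
  ([set x; y; z] \in colour_graph phi) = [&& red phi x y, ~~ red phi x z & ~~ red phi y z].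
Proof.
move=> xy yz; apply/idP/idP => [/colour_graphP[x' [y' [z' [p E]]]]|].
- case/and5P: p => xy' yz' r1 r2 r3.
  by have [-> -> ->] := set3_sorted_inj xy yz xy' yz' E; rewrite r1 r2 r3.
- case/and3P=> r1 r2 r3; rewrite inE; apply/existsP; exists x; apply/existsP; exists y.
  by apply/existsP; exists z; rewrite /edge_pattern xy yz r1 r2 r3 eqxx.
Qed.

Lemma colour_graph_local phi psi A : {in pairs_in A, phi =1 psi} ->
  (A \in colour_graph phi) = (A \in colour_graph psi).
Proof.
have [/eqP A3 | nA3] := boolP (#|A| == 3); last first.
  have notin chi : A \notin colour_graph chi by apply: contra nA3 => /colour_graph_card3 ->.
  by rewrite !(negbTE (notin _)).
have [x [y [z [xy yz ->]]]] := set3_sorted A3 => eq_pq.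
have xz : x < z by exact: ltn_trans yz.
by rewrite !colour_graph_sorted // /red !eq_pq // unfold_in /pairs_in /= !inE ?eqxx ?orbT ?xy ?yz ?xz.
Qed.

Definition sym_red phi a b : bool := if a < b then red phi a b else red phi b a.

Lemma sym_red_edge phi a b c : [set a; b; c] \in colour_graph phi ->
  a != b -> b != c -> a != c -> sym_red phi a b = (a < c) && (b < c).
Proof.
move=> /colour_graphP[x [y [z [/and5P[xy yz rxy rxz ryz] E]]]] ab bc ac.
have ha : a \in [set x; y; z] by rewrite -E !inE eqxx.
have hb : b \in [set x; y; z] by rewrite -E !inE eqxx ?orbT.
have hc : c \in [set x; y; z] by rewrite -E !inE eqxx ?orbT.
have xz : x < z by apply: ltn_trans yz.
move: rxz ryz => /negbTE rxz /negbTE ryz.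
have yx : (y < x) = false by apply/negbTE; rewrite -leqNgt ltnW.
have zx : (z < x) = false by apply/negbTE; rewrite -leqNgt ltnW.
have zy : (z < y) = false by apply/negbTE; rewrite -leqNgt ltnW.
move: ha hb hc ab bc ac; rewrite !inE => ha hb hc.
by case/orP: ha => [/orP[]|] /eqP -> ; case/orP: hb => [/orP[]|] /eqP -> ;
  case/orP: hc => [/orP[]|] /eqP -> ;
  rewrite ?eqxx //= /sym_red ?xy ?yz ?xz ?yx ?zx ?zy ?ltnn ?rxy ?rxz ?ryz.
Qed.

End ColourGraph.

Section TightCycle.
Local Open Scope nat_scope.

(* Let m i be the offset in {0, 1, 2} of the maximum of V i, V i.+1, V i.+2.
   The hypothesis says m i.+1 = 2 iff m i = 0, and since consecutive windows
   share two values this forces m i.+1 = m i - 1 (mod 3); the period l must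
   then be a multiple of 3. *)
Lemma window_max_period_dvd3 (l : nat) (V : nat -> nat) :
  (forall i, V (i + l) = V i) ->
  (forall i, [/\ V i != V i.+1, V i.+1 != V i.+2 & V i != V i.+2]) ->
  (forall i, (V i.+1 < V i.+3 /\ V i.+2 < V i.+3) <-> (V i.+1 < V i /\ V i.+2 < V i)) ->
  3 %| l.
Proof.
move=> V_per V_neq V_max.
pose last_max i := V i < V i.+2 /\ V i.+1 < V i.+2.
have neq i : V i <> V i.+1 /\ V i.+1 <> V i.+2 /\ V i <> V i.+2.
  by case: (V_neq i) => /eqP ? /eqP ? /eqP ?.
have step i : last_max i -> last_max i.+3 /\ ~ last_max i.+1 /\ ~ last_max i.+2.
  rewrite /last_max; have := V_max i; have := V_max i.+1; have := V_max i.+2.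
  have := neq i; have := neq i.+1; have := neq i.+2; have := neq i.+3.
  lia.
have [i0 max_i0] : exists i0, last_max i0.
  have : last_max 0 \/ last_max 1 \/ last_max 2.
    rewrite /last_max; have := V_max 0; have := V_max 1.
    have := neq 0; have := neq 1; have := neq 2; lia.
  by case=> [h|[h|h]]; [exists 0 | exists 1 | exists 2].
have max_every3 k : last_max (i0 + 3 * k).
  elim: k => [|k IH]; first by rewrite muln0 addn0.
  have -> : i0 + 3 * k.+1 = (i0 + 3 * k).+3 by rewrite mulnS; lia.
  by case: (step _ IH).
have max_period : last_max (i0 + l).
  by rewrite /last_max -addSn -!addSn !V_per.
apply/negPn/negP => l_ndvd3.
have [_ [not1 not2]] := step _ (max_every3 (l %/ 3)).
have : l %% 3 = 1 \/ l %% 3 = 2 by move: l_ndvd3; rewrite /dvdn; lia.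
case=> l_mod.
- by apply: not1; have <- : i0 + l = (i0 + 3 * (l %/ 3)).+1 by lia.
- by apply: not2; have <- : i0 + l = (i0 + 3 * (l %/ 3)).+2 by lia.
Qed.

Context {l : nat} (l_gt0 : 0 < l).

Definition cycle_vertex (i : nat) : 'I_l := Ordinal (ltn_pmod i l_gt0).

Lemma cycle_vertexD i k : cyc_shift l (cycle_vertex i) k = cycle_vertex (i + k).
Proof. by apply: val_inj; rewrite /= modnDml. Qed.

Lemma cycle_vertex_period i : cycle_vertex (i + l) = cycle_vertex i.
Proof. by apply: val_inj; rewrite /= modnDr. Qed.

Lemma tight_cycle_window i :
  [set cycle_vertex i; cycle_vertex i.+1; cycle_vertex i.+2] \in tight_cycle l.
Proof.
apply/imsetP; exists (cycle_vertex i) => //.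
by rewrite !cycle_vertexD addn0 addn1 addn2.
Qed.

Lemma cycle_vertex_neq i k : 3 <= l -> 0 < k < 3 -> cycle_vertex i != cycle_vertex (i + k).
Proof.
move=> l_ge3 /andP[k_gt0 k_lt3]; apply/eqP => /(congr1 val) /= /eqP.
rewrite -{1}[i]addn0 eqn_modDl mod0n modn_small; last exact: leq_trans k_lt3 l_ge3.
by move=> /eqP k0; rewrite -k0 in k_gt0.
Qed.

End TightCycle.

Lemma colour_graph_tight_cycle_free (n l : nat) (phi : colouring n) :
  (3 <= l)%N -> ~~ (3 %| l)%N -> free_of l n (tight_cycle l) (colour_graph phi).
Proof.
move=> l_ge3 l_ndvd3 [f [f_inj f_edge]]; move/negP: l_ndvd3; apply.
have l_gt0 : (0 < l)%N by apply: leq_trans l_ge3.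
pose v := f \o cycle_vertex l_gt0.
have v_neq i k : (0 < k < 3)%N -> v i != v (i + k)%N.
  by move=> k_bd; rewrite (inj_eq f_inj) cycle_vertex_neq.
have edge i : [set v i; v i.+1; v i.+2] \in colour_graph phi.
  by have := f_edge _ (tight_cycle_window l_gt0 i); rewrite !imsetU !imset_set1.
have neq i : [/\ v i != v i.+1, v i.+1 != v i.+2 & v i != v i.+2].
  by split; [move: (v_neq i 1 isT) | move: (v_neq i.+1 1 isT) | move: (v_neq i 2 isT)];
    rewrite ?addn1 ?addn2.
have red_next i : sym_red phi (v i.+1) (v i.+2) = (v i.+1 < v i.+3)%N && (v i.+2 < v i.+3)%N.
  by have [n12 n23 n13] := neq i.+1; apply: sym_red_edge.
have red_prev i : sym_red phi (v i.+1) (v i.+2) = (v i.+1 < v i)%N && (v i.+2 < v i)%N.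
  have [n01 n12 n02] := neq i.
  apply: sym_red_edge; rewrite // 1?eq_sym //.
  by rewrite set3_rot; apply: edge.
apply: (@window_max_period_dvd3 l (fun i => v i)).
- by move=> i; rewrite /v /= cycle_vertex_period.
- by move=> i; case: (neq i).
- move=> i /=; have E := red_next i; rewrite red_prev in E.
  by split=> /andP; [rewrite -E | rewrite E] => /andP.
Qed.

Lemma sumr_indicator (R : pzSemiRingType) (T : finType) (P : pred T) :
  \sum_(i : T) ((P i)%:R : R) = #|[set i | P i]|%:R.
Proof.
rewrite -sum1dep_card natr_sum [RHS]big_mkcond /=.
by apply: eq_bigr => i _; case: (P i).
Qed.

Lemma sum_nat_indicator (T : finType) (A : {pred T}) (P : pred T) :
  (\sum_(x in A) P x)%N = #|[set x in A | P x]|.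
Proof.
rewrite -sum1dep_card big_mkcondr /=.
by apply: eq_bigr => x _; case: (P x).
Qed.

Lemma exists_notin_all (T I : finType) (B : I -> {set T}) :
  (\sum_i #|B i| < #|T|)%N -> exists t, forall i, t \notin B i.
Proof.
move=> lt_sum.
case: (pickP [pred t | [forall i, t \notin B i]]) => [t /forallP t_out | all_in].
  by exists t.
suff : (#|T| <= \sum_i #|B i|)%N by rewrite leqNgt lt_sum.
have cover t : (1 <= \sum_i (t \in B i))%N.
  have /negbT := all_in t; rewrite negb_forall => /existsP[i]; rewrite negbK => t_in.
  by rewrite (bigD1 i) //= t_in.
rewrite -sum1_card; apply: (@leq_trans (\sum_(t in T) \sum_i (t \in B i))).
  by apply: leq_sum => t _; exact: cover.
rewrite exchange_big; apply/eq_leq/eq_bigr => i _.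
by rewrite sum_nat_indicator; apply: eq_card => t; rewrite !inE.
Qed.

Lemma card_set (T : finType) : #|{set T}| = (2 ^ #|T|)%N.
Proof.
rewrite -cardsT -card_powerset; apply: eq_card => A.
by rewrite !inE finset.subsetT.
Qed.

Section Mean.
Context {R : numFieldType} {K C : finType}.
Implicit Types (U : pred K) (phi psi : {ffun K -> C}) (f g : {ffun K -> C} -> R).

Definition mean f : R := (\sum_phi f phi) / #|{ffun K -> C}|%:R.

Lemma eq_mean f g : f =1 g -> mean f = mean g.
Proof. by move=> eq_fg; rewrite /mean (eq_bigr _ (fun phi _ => eq_fg phi)). Qed.

Definition depends_on U f := forall phi psi, {in U, phi =1 psi} -> f phi = f psi.

Definition mix U phi psi : {ffun K -> C} := [ffun k => if U k then phi k else psi k].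

(* Exchanging the U-coordinates of a pair (phi, psi) is an involution that
   turns f phi * g psi into f phi' * g phi'. *)
Lemma sum_mul_indep {U f g} : depends_on U f -> depends_on (predC U) g ->
  #|{ffun K -> C}|%:R * (\sum_phi f phi * g phi) = (\sum_phi f phi) * (\sum_phi g phi).
Proof.
move=> f_U g_U; symmetry.
rewrite mulr_suml; under eq_bigr do rewrite mulr_sumr.
rewrite pair_bigA /=.
pose swap (p : {ffun K -> C} * {ffun K -> C}) := (mix U p.1 p.2, mix U p.2 p.1).
have swapK : involutive swap.
  by case=> a b; congr (_, _); apply/ffunP => k; rewrite !ffunE; case: (U k).
transitivity (\sum_p f (swap p).1 * g (swap p).1).
  apply: eq_bigr => p _; congr (_ * _); [apply: f_U | apply: g_U] => k;
  by rewrite unfold_in /= ffunE => Uk; rewrite ?(negbTE Uk) ?Uk.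
rewrite mulr_natl -sumrMnl.
under [in RHS]eq_bigr do rewrite -sumr_const.
rewrite (pair_bigA _ (fun a b => f a * g a)) /=.
by rewrite [RHS](reindex_inj (inv_inj swapK)).
Qed.

Hypothesis C_gt0 : (0 < #|C|)%N.

Lemma card_ffun_neq0 : (#|{ffun K -> C}|%:R : R) != 0.
Proof. by rewrite pnatr_eq0 -lt0n card_ffun expn_gt0 C_gt0. Qed.

Lemma mean_mul_indep U f g : depends_on U f -> depends_on (predC U) g ->
  mean (fun phi => f phi * g phi) = mean f * mean g.
Proof.
move=> f_U g_U; have N_neq0 := card_ffun_neq0.
by rewrite /mean mulrACA -(sum_mul_indep f_U g_U); field.
Qed.

Lemma mean_cst (c : R) : mean (fun _ => c) = c.
Proof.
have N_neq0 := card_ffun_neq0.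
by rewrite /mean sumr_const -[c *+ _]mulr_natr mulfK.
Qed.

Lemma mean_affine (a b : R) f : mean (fun phi => a + b * f phi) = a + b * mean f.
Proof.
have N_neq0 := card_ffun_neq0.
by rewrite /mean big_split /= sumr_const -mulr_sumr -mulr_natr; field.
Qed.

Lemma mean_prod_indep {I : eqType} (s : seq I) (U : I -> pred K)
    (g : I -> {ffun K -> C} -> R) :
  uniq s -> (forall i, depends_on (U i) (g i)) ->
  {in s &, forall i j, i != j -> forall k, U i k -> ~~ U j k} ->
  mean (fun phi => \prod_(i <- s) g i phi) = \prod_(i <- s) mean (g i).
Proof.
elim: s => [|a s IH] /= => [_ _ _|/andP[a_notin s_uniq] g_U U_disj].
  by rewrite big_nil -[RHS](mean_cst 1); apply: eq_mean => phi; rewrite big_nil.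
rewrite (eq_mean _ (fun phi => g a phi * \prod_(i <- s) g i phi)) => [|phi]; last first.
  by rewrite big_cons.
rewrite big_cons (mean_mul_indep (U a)) ?IH //.
- by move=> i j i_s j_s; apply: U_disj; rewrite inE ?i_s ?j_s orbT.
- move=> phi psi eq_a; apply: eq_big_seq => i i_s; apply: g_U => k Uik; apply: eq_a.
  apply: (U_disj i a) => //; rewrite ?inE ?i_s ?eqxx ?orbT //.
  by apply: contraNneq a_notin => <-.
Qed.

End Mean.

Lemma card_ffun3_pattern (K : finType) (c1 c2 c3 : K) :
  c1 != c2 -> c1 != c3 -> c2 != c3 ->
  #|[set phi : {ffun K -> 'I_3} | [&& phi c1 == ord0, phi c2 != ord0 & phi c3 != ord0]]|
  = (4 * 3 ^ (#|K| - 3))%N.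
Proof.
move=> c12 c13 c23.
pose F (k : K) : pred 'I_3 :=
  if k == c1 then pred1 ord0 else if (k == c2) || (k == c3) then predC1 ord0 else predT.
rewrite (eq_card (B := family F)); last first.
  move=> phi; rewrite inE /= /F; apply/and3P/familyP.
  - case=> e1 e2 e3 k; case: eqP => [->|_] //=.
    by case: eqP => [->|_] //=; case: eqP => [->|_].
  - move=> phi_F; split; first by have := phi_F c1; rewrite eqxx.
    + by have := phi_F c2; rewrite eq_sym (negbTE c12) eqxx.
    + by have := phi_F c3; rewrite eq_sym (negbTE c13) eqxx orbT.
have c21 : (c2 == c1) = false by rewrite eq_sym (negbTE c12).
have c31 : (c3 == c1) = false by rewrite eq_sym (negbTE c13).
have c32 : (c3 == c2) = false by rewrite eq_sym (negbTE c23).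
rewrite card_family foldrE big_map big_enum /=.
rewrite (bigD1 c1) //= (bigD1 c2) /=; last by rewrite c21.
rewrite (bigD1 c3) /=; last by rewrite c31 c32.
rewrite /F eqxx c21 c31 c32 eqxx /= eqxx card1 cardC1 card_ord.
rewrite (eq_bigr (fun _ => 3%N)); last first.
  by move=> k /andP[/andP[/negbTE-> /negbTE->] /negbTE->] /=; rewrite card_ord.
rewrite prod_nat_const /= mul1n mulnA; congr (_ * 3 ^ _)%N.
have -> : #|[pred k | (k != c1) && (k != c2) && (k != c3)]| = #|~: [set c1; c2; c3]|.
  by apply: eq_card => k; rewrite !inE /= !negb_or.
by rewrite cardsCs finset.setCK -finset.setUA !cardsU1 cards1 !inE (negbTE c12) (negbTE c13) (negbTE c23).
Qed.

Lemma card_ord3_gt0 : (0 < #|'I_3|)%N. Proof. by rewrite card_ord. Qed.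

Lemma mean_colour_graph_mem (R : numFieldType) (n : nat) (A : {set 'I_n}) : #|A| = 3%N ->
  mean (fun phi : colouring n => ((A \in colour_graph phi)%:R : R)) = 4 / 27.
Proof.
move=> A3; have [x [y [z [xy yz ->]]]] := set3_sorted A3.
have n_ge3 : (3 <= n)%N by have := ltn_ord z; lia.
rewrite /mean (eq_bigr (fun phi : colouring n =>
   ([&& phi (x, y) == ord0, phi (x, z) != ord0 & phi (y, z) != ord0] : bool)%:R)); last first.
  by move=> phi _; rewrite colour_graph_sorted.
rewrite sumr_indicator card_ffun3_pattern; first last.
- by rewrite xpair_eqE -val_eqE /= ltn_eqF.
- by rewrite xpair_eqE -val_eqE /= ltn_eqF.
- by rewrite xpair_eqE -[y == z]val_eqE /= ltn_eqF ?andbF.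
rewrite card_ffun card_prod !card_ord.
have -> : (3 ^ (n * n) = 3 ^ (n * n - 3) * 27)%N.
  by rewrite -[27%N]/(3 ^ 3)%N -expnD subnK //; nia.
by rewrite !natrM; field; rewrite pnatr_eq0 expn_eq0.
Qed.

Lemma expRN_le {R : realType} (x : R) : 0 <= x -> expR (- x) <= 1 - x + x ^+ 2.
Proof.
move=> x_ge0.
have half_le : (1 + x / 2) ^+ 2 <= expR x.
  have -> : expR x = expR (x / 2) ^+ 2 by rewrite -expRM_natl; congr expR; field.
  by apply: lerXn2r; rewrite ?nnegrE ?expR_ge0 ?expR_ge1Dx //; lra.
have expRNK : expR (- x) * expR x = 1 by rewrite mulrC expRxMexpNx_1.
have := expR_gt0 x; have := expR_gt0 (- x).
set a := expR (- x) in expRNK *; set E := expR x in half_le expRNK *.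
move=> a_gt0 E_gt0.
have q_gt0 : 0 < 1 - x + x ^+ 2 by nra.
have : 1 <= (1 - x + x ^+ 2) * E.
  by apply: (le_trans _ (ler_wpM2l (ltW q_gt0) half_le)); nra.
nra.
Qed.

Section LowerTail.
Context {R : realType} {n : nat} (F : {set {set 'I_n}}).
Hypothesis F_card3 : {in F, forall A : {set 'I_n}, #|A| = 3%N}.
Hypothesis F_pair_disjoint :
  {in F &, forall A B : {set 'I_n}, A != B -> forall k, pairs_in A k -> ~~ pairs_in B k}.

Definition edge_count (phi : colouring n) : nat := #|[set A in F | A \in colour_graph phi]|.

Lemma sum_expR_edge_count (lam : R) :
  \sum_(phi : colouring n) expR (- lam * (edge_count phi)%:R) =
  #|colouring n|%:R * (1 + 4 / 27 * (expR (- lam) - 1)) ^+ #|F|.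
Proof.
have N_neq0 : (#|colouring n|%:R : R) != 0 := card_ffun_neq0 card_ord3_gt0.
pose f (A : {set 'I_n}) (phi : colouring n) := expR (- lam * ((A \in colour_graph phi)%:R : R)).
have -> : \sum_(phi : colouring n) expR (- lam * (edge_count phi)%:R) =
          mean (fun phi => \prod_(A <- enum F) f A phi) * #|colouring n|%:R.
  rewrite /mean divfK //; apply: eq_bigr => phi _.
  by rewrite /edge_count -sum_nat_indicator natr_sum mulr_sumr expR_sum big_enum.
rewrite mulrC (mean_prod_indep card_ord3_gt0 _ pairs_in).
- rewrite big_enum /= -prodr_const; congr (_ * _); apply: eq_bigr => A A_F.
  rewrite (eq_mean _ (fun phi => 1 + (expR (- lam) - 1) * (A \in colour_graph phi)%:R)).
    by rewrite (mean_affine card_ord3_gt0) mean_colour_graph_mem ?F_card3 // mulrC.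
  by move=> phi; rewrite /f; case: (A \in colour_graph phi); rewrite ?mulr1 ?mulr0 ?expR0; ring.
- exact: enum_uniq.
- by move=> A phi psi eq_A; rewrite /f (colour_graph_local phi psi A eq_A).
- by move=> A B; rewrite !mem_enum; apply: F_pair_disjoint.
Qed.

Lemma card_edge_count_lt (lam t : R) : 0 <= lam ->
  #|[set phi : colouring n | (edge_count phi)%:R < 4 / 27 * #|F|%:R - t]|%:R <=
  #|colouring n|%:R * expR (4 / 27 * #|F|%:R * lam ^+ 2 - lam * t).
Proof.
move=> lam_ge0; set B := [set phi | _].
pose mgf := \sum_(phi : colouring n) expR (- lam * (edge_count phi)%:R).
have markov : #|B|%:R * expR (- lam * (4 / 27 * #|F|%:R - t)) <= mgf.
  apply: (@le_trans _ _ (\sum_(phi in B) expR (- lam * (edge_count phi)%:R))).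
    rewrite mulr_natl -sumr_const; apply: ler_sum => phi; rewrite inE => phi_B.
    by rewrite ler_expR; nra.
  by rewrite [leRHS](bigID (mem B)) /= lerDl sumr_ge0 // => phi _; rewrite expR_ge0.
have mgf_le : mgf <= #|colouring n|%:R * expR (#|F|%:R * (4 / 27 * (lam ^+ 2 - lam))).
  rewrite /mgf sum_expR_edge_count ler_wpM2l // expRM_natl.
  apply: lerXn2r; rewrite ?nnegrE ?expR_ge0 //; first by have := expR_gt0 (- lam); nra.
  apply: (le_trans _ (expR_ge1Dx _)); rewrite lerD2l ler_pM2l; last by lra.
  by have := expRN_le lam lam_ge0; lra.
pose x := - lam * (4 / 27 * #|F|%:R - t).
have -> : (#|B|%:R : R) = #|B|%:R * expR x * expR (- x).
  by rewrite -mulrA expRxMexpNx_1 mulr1.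
apply: (le_trans (ler_wpM2r (expR_ge0 _) (le_trans markov mgf_le))).
rewrite -(mulrA (#|colouring n|%:R)) -expRD.
suff -> : #|F|%:R * (4 / 27 * (lam ^+ 2 - lam)) - x =
          4 / 27 * #|F|%:R * lam ^+ 2 - lam * t by [].
by rewrite /x; ring.
Qed.

End LowerTail.

Section ResidueTriples.
Local Open Scope nat_scope.
Context {n : nat}.
Implicit Types (S A : {set 'I_n}) (r : 'I_n).

Definition residue_triples S r : {set {set 'I_n}} :=
  [set A : {set 'I_n} | [&& A \subset S, #|A| == 3 & (\sum_(x in A) x) %% n == r]].

Lemma residue_triples_card3 S r : {in residue_triples S r, forall A : {set 'I_n}, #|A| = 3}.
Proof. by move=> A; rewrite inE => /and3P[_ /eqP -> _]. Qed.

(* Two vertices and the residue of the vertex sum determine the third vertex. *)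
Lemma residue_triples_pair_disjoint S r :
  {in residue_triples S r &, forall A B : {set 'I_n},
    A != B -> forall k, pairs_in A k -> ~~ pairs_in B k}.
Proof.
move=> A B; rewrite !inE => /and3P[_ /eqP A3 /eqP rA] /and3P[_ /eqP B3 /eqP rB] AB k.
case/and3P => uA wA uw; apply/negP => /and3P[uB wB _].
have uw' : k.1 != k.2 by rewrite neq_ltn uw.
have [a [EA sumA]] := set3_third A3 uA wA uw'.
have [b [EB sumB]] := set3_third B3 uB wB uw'.
move/negP: AB; apply; apply/eqP.
have : a %% n = b %% n.
  by apply/eqP; rewrite -(eqn_modDl k.2) -(eqn_modDl k.1) -sumA -sumB rA rB.
by rewrite !modn_small ?ltn_ord // => /val_inj ab; rewrite EA EB ab.
Qed.

Lemma sum_card_residue (Q : {set {set 'I_n}}) : 0 < n ->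
  \sum_(r : 'I_n) #|[set A in Q | (\sum_(x in A) x) %% n == r]| = #|Q|.
Proof.
move=> n_gt0; under eq_bigr do rewrite -sum_nat_indicator.
rewrite exchange_big /= -sum1_card; apply: eq_bigr => A _.
rewrite (bigD1 (Ordinal (ltn_pmod (\sum_(x in A) x) n_gt0))) //= eqxx big1 // => r r_neq.
by case: eqP => // sumA; move/eqP: r_neq; case; apply: val_inj; rewrite /= sumA.
Qed.

Lemma sum_card_residue_triples S : 0 < n ->
  \sum_(r : 'I_n) #|residue_triples S r| = 'C(#|S|, 3).
Proof.
move=> n_gt0; rewrite -cards_draws -(sum_card_residue _ n_gt0).
by apply: eq_bigr => r _; apply: eq_card => A; rewrite !inE andbA.
Qed.

Lemma card_induced_edges (H : {set {set 'I_n}}) S :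
  0 < n -> {in H, forall e : {set 'I_n}, #|e| = 3} ->
  #|[set e in H | e \subset S]| = \sum_(r : 'I_n) #|[set A in residue_triples S r | A \in H]|.
Proof.
move=> n_gt0 H3; rewrite -(sum_card_residue _ n_gt0); apply: eq_bigr => r _.
apply: eq_card => A; rewrite !inE; case A_H: (A \in H); rewrite ?andbF //=.
by rewrite (H3 _ A_H) eqxx andbT.
Qed.

End ResidueTriples.

Section NondeficientColouring.
Context {R : realType} {n : nat}.
Implicit Types (lam gam : R) (S : {set 'I_n}) (r : 'I_n) (phi : colouring n).

Definition deficient lam gam S r phi : bool :=
  (edge_count (residue_triples S r) phi)%:R <
    4 / 27 * #|residue_triples S r|%:R * (1 - lam) - gam * (n * n)%:R.

Lemma card_deficient lam gam S r : 0 <= lam ->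
  #|[set phi | deficient lam gam S r phi]|%:R <=
  #|colouring n|%:R * expR (- (lam * gam) * (n * n)%:R).
Proof.
move=> lam_ge0; set k : R := #|residue_triples S r|%:R.
have := card_edge_count_lt _ (residue_triples_card3 S r) (residue_triples_pair_disjoint S r)
  lam (4 / 27 * k * lam + gam * (n * n)%:R) lam_ge0.
have -> : 4 / 27 * k * lam ^+ 2 - lam * (4 / 27 * k * lam + gam * (n * n)%:R) =
          - (lam * gam) * (n * n)%:R by ring.
congr (_%:R <= _); apply: eq_card => phi; rewrite !inE /deficient -/k.
by congr (_ < _); ring.
Qed.

Lemma exists_nondeficient lam gam : 0 <= lam ->
  (2 ^ n * n)%:R * expR (- (lam * gam) * (n * n)%:R) < 1 ->
  exists phi, forall S r, ~~ deficient lam gam S r phi.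
Proof.
move=> lam_ge0 small.
suff [phi phi_ok] : exists phi, forall Sr : {set 'I_n} * 'I_n,
    phi \notin [set phi | deficient lam gam Sr.1 Sr.2 phi].
  by exists phi => S r; have := phi_ok (S, r); rewrite inE.
apply: exists_notin_all; rewrite -(ltr_nat R) natr_sum.
apply: (@le_lt_trans _ _ (\sum_(Sr : {set 'I_n} * 'I_n)
   #|colouring n|%:R * expR (- (lam * gam) * (n * n)%:R))).
  by apply: ler_sum => Sr _; exact: card_deficient.
have N_gt0 : (0 : R) < #|colouring n|%:R.
  by rewrite lt0r (card_ffun_neq0 card_ord3_gt0) ler0n.
rewrite sumr_const card_prod card_set !card_ord -[(_ * _) *+ _]mulr_natr.
by rewrite -(mulrA (#|colouring n|%:R)) gtr_pMr // mulrC.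
Qed.

Lemma induced_edges_ge lam gam phi S : (0 < n)%N -> (forall r, ~~ deficient lam gam S r phi) ->
  4 / 27 * (1 - lam) * 'C(#|S|, 3)%:R - n%:R * (gam * (n * n)%:R) <=
  #|[set e in colour_graph phi | e \subset S]|%:R.
Proof.
move=> n_gt0 phi_ok.
rewrite (card_induced_edges _ _ n_gt0 (@colour_graph_card3 n phi)).
rewrite -(sum_card_residue_triples S n_gt0) !natr_sum mulr_sumr.
have -> : n%:R * (gam * (n * n)%:R) = \sum_(r : 'I_n) gam * (n * n)%:R.
  by rewrite sumr_const card_ord mulr_natl.
rewrite -sumrB; apply: ler_sum => r _.
by have := phi_ok r; rewrite /deficient -leNgt; nra.
Qed.

End NondeficientColouring.

Lemma expn3_le_binomial {R : realFieldType} (s : nat) :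
  (3 <= s)%N -> (s%:R ^+ 3 : R) <= 27 * 'C(s, 3)%:R.
Proof.
case: s => [|[|[|m]]] // _.
have binE : ('C(m.+3, 3) * 6 = m.+3 * m.+2 * m.+1)%N.
  by rewrite -[6%N]/(3`!)%N bin_ffact !ffactnS ffactn0 /= muln1 mulnA.
have binR : ('C(m.+3, 3)%:R * 6 : R) = m.+3%:R * m.+2%:R * m.+1%:R.
  by rewrite -[6]/(6%:R) -!natrM binE.
have m_ge0 : (0 : R) <= m%:R by [].
rewrite -[m.+3]addn3 -[m.+2]addn2 -[m.+1]addn1 !natrD in binR *.
nra.
Qed.

Lemma pow2_mul_le_expR {R : realType} (n : nat) : ((2 ^ n * n)%:R : R) <= expR (2 * n%:R).
Proof.
have two_le_e : (2 : R) <= expR 1 by have := expR_ge1Dx (1 : R); lra.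
have pow2_le : ((2 ^ n)%:R : R) <= expR n%:R.
  rewrite -[n%:R]mulr1 expRM_natl natrX; apply: lerXn2r; rewrite ?nnegrE //.
  exact: le_trans two_le_e.
have n_le : (n%:R : R) <= (2 ^ n)%:R by rewrite ler_nat ltnW // ltn_expl.
by rewrite natrM mulrDl mul1r expRD ler_pM // (le_trans n_le).
Qed.

Lemma linear_density_ge (R : realType) (eps d : R) (n : nat) (H : {set {set 'I_n}}) :
  d <= 1 ->
  (forall S : {set 'I_n}, eps * n%:R <= #|S|%:R -> d <= induced_density R n H S) ->
  d <= linear_density R eps n H.
Proof.
move=> d_le1 dense; apply: (big_ind (fun x => d <= x)) => // x y dx dy.
by rewrite le_min dx dy.
Qed.

Lemma le_sup_of_itv (R : realType) (E : set R) (a : R) : 0 < a ->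
  (forall d, 0 <= d < a -> E d) -> has_ubound E -> a <= sup E.
Proof.
move=> a_gt0 E_itv E_ub.
have E_sup : has_sup E by split=> //; exists 0; apply: E_itv; rewrite lexx.
rewrite leNgt; apply/negP => sup_lt.
have sup_ge0 : 0 <= sup E by apply: sup_upper_bound => //; apply: E_itv; rewrite lexx.
have : (sup E + a) / 2 <= sup E.
  by apply: sup_upper_bound => //; apply: E_itv; apply/andP; split; lra.
lra.
Qed.

Section DenseColourGraph.
Context {R : realType} {d eps : R} (d_lt : d < 4 / 27) (eps_gt0 : 0 < eps).

Lemma induced_density_colour_graph_ge (lam gam : R) (n : nat) (phi : colouring n)
    (S : {set 'I_n}) :
  4 / 27 * (1 - lam) = (4 / 27 + d) / 2 -> gam = (4 / 27 - d) * eps ^+ 3 / 54 ->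
  (0 < n)%N -> (forall r, ~~ deficient lam gam S r phi) ->
  3 < eps * n%:R -> eps * n%:R <= #|S|%:R ->
  d <= induced_density R n (colour_graph phi) S.
Proof.
move=> lamE gamE n_gt0 phi_ok eps_n S_large.
have S_ge3 : (3 <= #|S|)%N by rewrite -(ler_nat R); lra.
have binom_gt0 : (0 : R) < 'C(#|S|, 3)%:R by rewrite ltr0n bin_gt0.
have cube_le : (eps * n%:R) ^+ 3 <= 27 * 'C(#|S|, 3)%:R.
  apply: le_trans (expn3_le_binomial _ S_ge3).
  by apply: lerXn2r; rewrite ?nnegrE //; lra.
rewrite /induced_density ler_pdivlMr //.
apply: le_trans (induced_edges_ge lam gam phi S n_gt0 phi_ok).
have -> : n%:R * (gam * (n * n)%:R) = (4 / 27 - d) / 2 * ((eps * n%:R) ^+ 3 / 27).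
  by rewrite gamE natrM; field.
rewrite lamE.
have : (4 / 27 - d) / 2 * ((eps * n%:R) ^+ 3 / 27) <= (4 / 27 - d) / 2 * 'C(#|S|, 3)%:R.
  by apply: ler_wpM2l; [move: d_lt; lra | rewrite ler_pdivrMr //; lra].
lra.
Qed.

Lemma exists_dense_colour_graph (N : nat) : exists n, (N <= n)%N /\
  exists phi : colouring n, d <= linear_density R eps n (colour_graph phi).
Proof.
pose lam : R := 1 / 2 - 27 * d / 8.
pose gam : R := (4 / 27 - d) * eps ^+ 3 / 54.
have lam_gt0 : 0 < lam by rewrite /lam; move: d_lt; lra.
have gam_gt0 : 0 < gam.
  by rewrite /gam; apply: divr_gt0 => //; apply: mulr_gt0; [move: d_lt; lra | exact: exprn_gt0].
have c_gt0 : 0 < lam * gam by exact: mulr_gt0.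
pose n := ((Num.truncn (2 / (lam * gam) + 3 / eps)).+1 + N)%N.
have n_large : 2 / (lam * gam) + 3 / eps < n%:R.
  by apply: lt_le_trans (truncnS_gt _) _; rewrite ler_nat leq_addr.
have c_term : 0 < 2 / (lam * gam) by rewrite divr_gt0.
have eps_term : 0 < 3 / eps by rewrite divr_gt0.
have c_n : 2 < lam * gam * n%:R by rewrite mulrC -ltr_pdivrMr //; lra.
have eps_n : 3 < eps * n%:R by rewrite mulrC -ltr_pdivrMr //; lra.
have n_gt0 : (0 < n)%N by rewrite /n addSn.
have small : (2 ^ n * n)%:R * expR (- (lam * gam) * (n * n)%:R) < 1.
  apply: le_lt_trans (ler_wpM2r (expR_ge0 _) (pow2_mul_le_expR n)) _.
  rewrite -expRD expR_lt1 natrM.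
  have : (0 : R) < n%:R by rewrite ltr0n.
  nra.
have [phi phi_ok] := exists_nondeficient lam gam (ltW lam_gt0) small.
exists n; split; first exact: leq_addl.
exists phi; apply: linear_density_ge => [|S S_large]; first by move: d_lt; lra.
apply: (induced_density_colour_graph_ge lam gam) => //.
by rewrite /lam; field.
Qed.

End DenseColourGraph.

Theorem proposition2p4 (R : realType) (l : nat) :
  (5 <= l)%N -> ~~ (3 %| l)%N ->
  (4%:R / 27%:R : R) <= uniform_turan_density R l (tight_cycle l).
Proof.
move=> l_ge5 l_ndvd3; apply: le_sup_of_itv => [||]; first by lra.
- move=> d /andP[d_ge0 d_lt]; split; first by apply/andP; split => //; lra.
  move=> eps eps_gt0 N.
  have [n [N_le_n [phi dense]]] := exists_dense_colour_graph d_lt eps_gt0 N.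
  exists n; split => //; exists (colour_graph phi); split; first exact: colour_graph_uniform.
  split => //; apply: colour_graph_tight_cycle_free => //; exact: leq_trans l_ge5.
- by exists 1 => y [/andP[_ ->]].
Qed.
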